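(* Consider the quenched random Lorentz tube described in the context, satisfying the standing assumptions (A1)–(A5). Let $\{S_n\}_{n\ge 0}$ be the cocycle of the exit function $e$ over the point-of-view system $(\Sigma,F,\lambda)$, i.e. $S_0\equiv 0$ and $S_n(x,\ell)=\sum_{k=0}^{n-1} \tilde e(F^k(x,\ell))$ for $n\ge1$, where $\tilde e(x,\ell):=e(x,\ell_0)$. If this cocycle is recurrent, i.e. for $\lambda$-a.e. $\xi\in\Sigma$ there is a subsequence $\{n_j\}_{j\in\mathbb N}$ with $S_{n_j}(\xi)=0$ for all $j$, then for $\Pi$-a.e. $\ell\in\Omega^{\mathbb Z}$ the system $(\mathcal M,T_\ell,\mu)$ is recurrent.
   Context: Geometry. Let $C_0\subset\mathbb R^2$ be a closed polygon two of whose sides, $G^1$ and $G^2$, are parallel and congruent, and let $\tau$ be the translation of $\mathbb R^2$ with $\tau(G^1)=G^2$. Set $C_n:=\tau^n(C_0)$, $G^j_n:=\tau^n(G^j)$ ($n\in\mathbb Z$, $j=1,2$), and the tube $\mathcal T:=\bigcup_{n\in\mathbb Z}C_n$ (so $G^2_n=G^1_{n+1}$). Let $\Omega$ be a measurable space; to each $\omega\in\Omega$ is associated (measurably) a configuration of closed, pairwise disjoint, piecewise smooth, convex, possibly empty sets $\mathcal O_1(\omega),\dots,\mathcal O_N(\omega)\subset C_0$ (scatterers). For a realization $\ell=(\ell_n)_{n\in\mathbb Z}\in\Omega^{\mathbb Z}$, the scatterers in $C_n$ are $\mathcal O_{n,i}(\ell_n):=\tau^n(\mathcal O_i(\ell_n))$.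 The realization $\ell$ is random with law $\Pi$ on $\Omega^{\mathbb Z}$; $\sigma$ is the left shift, $(\sigma\ell)_n=\ell_{n+1}$. Dynamics. The table is $Q_\ell:=\mathcal T\setminus\bigcup_{n,i}\mathcal O_{n,i}(\ell_n)$; the billiard flow on $Q_\ell\times S^1$ is unit-speed free motion in the interior of $Q_\ell$ with elastic reflection (angle of reflection equals angle of incidence) at $\partial Q_\ell$; it is taken right-continuous (post-collisional velocities), and a trajectory hitting a non-smooth point of $\partial Q_\ell$ stays there forever. A trajectory is singular if at some time it hits $\partial Q_\ell$ tangentially or at a vertex. Let $o_j$ be the inner normal of $C_n$ at $G^j_n$ (so $o_2=-o_1$), $\mathcal N^j_n:=\{(q,v)\in G^j_n\times S^1: v\cdot o_j>0\}$ and $\mathcal M:=\bigcup_{n\in\mathbb Z}\bigcup_{j=1,2}\mathcal N^j_n$. $T_\ell:\mathcal M\to\mathcal M$ is the Poincaré (first-return) map of the flow to $\mathcal M$ (successive crossings of the gates $G^j_n$), and $\mu$ is the infinite, $\sigma$-finite invariant measure $d\mu(q,v)=(v\cdot o_j)\,dq\,dv$ on each $\mathcal N^j_n$. The system $(\mathcal M,T_\ell,\mu)$ is called recurrent if for every measurable $A\subseteq\mathcal M$, $\mu$-a.e. $x\in A$ returns to $A$ at least once under $T_\ell$. Standing assumptions. (A1) $\Pi$ is ergodic for $\sigma$. (A2) There is a positive integer $K$ such that for $\Pi$-a.e. $\ell$ each $\partial\mathcal O_{n,i}$ consists of at most $K$ compact connected $C^3$ pieces which may intersect only at their endpoints (vertices).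 (A3) For $x=(q,v)$ let $\gamma(x)$ be the first time the trajectory of $x$ hits a non-flat part of the boundary, and let $k(q)$ be the curvature of $\partial Q_\ell$ at a smooth point $q$ (positive for the convex scatterers). There are constants $0<\gamma_m<\gamma_M$ such that for a.e. $\ell$ and all $x=(q,v)$ with $q\in\partial Q_\ell$ and $k(q)>0$, $\gamma_m\le\gamma(x)\le\gamma_M$; moreover, starting from such $x$ and within time $\gamma(x)$ there are at most $M$ collisions with flat parts of the boundary, $M$ a universal constant. (A4) There is $k_m>0$ such that for a.e. $\ell$ and every smooth point $q$ of $\partial Q_\ell$, either $\partial Q_\ell$ is flat at $q$ or $k(q)\ge k_m$. (A5) For a.e. $\ell$ and all $i,j\in\{1,2\}$ there is a non-singular trajectory entering $C_0$ through $G^i$ and leaving it through $G^j$. Point of view of the particle. Let $\mathcal N^j:=\mathcal N^j_0$, $\mathcal N:=\mathcal N^1\cup\mathcal N^2$, and $\mu_0$ the measure $(v\cdot o_j)\,dq\,dv$ on $\mathcal N$ normalized to 1. For $\omega\in\Omega$ and $x=(q,v)\in\mathcal N$, follow the billiard trajectory of $x$ in $C_0$ with scatterers $\mathcal O_i(\omega)$ until it first crosses $G^1$ or $G^2$, at the point $q_1$ with velocity $v_1$, entering the cell $C_\epsilon$, $\epsilon\in\{-1,+1\}$ (defined for a.e. $x$). Set $R_\omega x:=(\tau^{-\epsilon}(q_1),v_1)\in\mathcal N$ and the exit function $e(x,\omega):=\epsilon$. Define $\Sigma:=\mathcal N\times\Omega^{\mathbb Z}$, $F(x,\ell):=(R_{\ell_0}x,\sigma^{e(x,\ell_0)}(\ell))$,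 and $\lambda:=\mu_0\times\Pi$, a probability measure preserved by $F$. *)

From HB Require Import structures.
From mathcomp Require Import all_boot all_order all_algebra.
From mathcomp Require Import all_classical all_reals all_analysis.
Set Implicit Arguments. Unset Strict Implicit. Unset Printing Implicit Defensive.
Import Order.TTheory GRing.Theory Num.Theory.
Local Open Scope classical_set_scope.
Local Open Scope ring_scope.

Definition cyl {d} (Om : measurableType d) : set (set (int -> Om)) :=
  [set C | exists (n : int) (A : set Om), measurable A /\
           C = [set l : int -> Om | A (l n)]].

Definition seqZ {d} (Om : measurableType d) := g_sigma_algebraType (@cyl d Om).

Definition shiftz {d} {Om : measurableType d} (k : int) (l : seqZ Om) : seqZ Om :=
  fun n => l (n + k).
Definition lshift {d} {Om : measurableType d} (l : seqZ Om) : seqZ Om := shiftz 1 l.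

Definition shift_ergodic {d} {Om : measurableType d} {R : realType}
  (Pi : probability (seqZ Om) R) : Prop :=
  measurable_fun setT (@lshift d Om) /\
  (forall A : set (seqZ Om), measurable A -> Pi (lshift @^-1` A) = Pi A) /\
  (forall A : set (seqZ Om), measurable A -> lshift @^-1` A = A ->
      Pi A = 0%E \/ Pi A = 1%E).

Definition Fpov {dN d} {N : measurableType dN} {Om : measurableType d}
  (Rm : Om -> N -> N) (e : N -> Om -> int) (xi : N * seqZ Om) : N * seqZ Om :=
  (Rm (xi.2 0) xi.1, shiftz (e xi.1 (xi.2 0)) xi.2).

Definition cocycle {dN d} {N : measurableType dN} {Om : measurableType d}
  (Rm : Om -> N -> N) (e : N -> Om -> int) (n : nat) (xi : N * seqZ Om) : int :=
  \sum_(k < n) (let y := iter k (Fpov Rm e) xi in e y.1 (y.2 0)).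

(* M = union over n in Z of the gate sets N^j_n; the point tau^n(x), x in N,
   is encoded as (n, x) : int * N. *)
Definition slice {N : Type} (n : int) (A : set (int * N)) : set N :=
  [set x | A (n, x)].

Definition measurableM {dN} {N : measurableType dN} (A : set (int * N)) : Prop :=
  forall n, measurable (slice n A).

(* mu on M, up to the irrelevant normalisation constant of mu_0. *)
Definition muM {dN} {N : measurableType dN} {R : realType}
  (mu0 : probability N R) (A : set (int * N)) : \bar R :=
  (\esum_(n in [set: int]) mu0 (slice n A))%E.

Definition negligibleM {dN} {N : measurableType dN} {R : realType}
  (mu0 : probability N R) (B : set (int * N)) : Prop :=
  exists C, [/\ measurableM C, B `<=` C & muM mu0 C = 0%E].

(* Poincare map to the gates: from tau^n(x) the particle moves in the cell C_n
   with scatterers O_i(l_n) and exits into C_{n + e(x,l_n)}. *)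
Definition Tmap {dN d} {N : measurableType dN} {Om : measurableType d}
  (Rm : Om -> N -> N) (e : N -> Om -> int) (l : seqZ Om) (p : int * N) : int * N :=
  (p.1 + e p.2 (l p.1), Rm (l p.1) p.2).

Definition preserves_muM {dN} {N : measurableType dN} {R : realType}
  (mu0 : probability N R) (T : int * N -> int * N) : Prop :=
  forall A, measurableM A -> measurableM (T @^-1` A) /\ muM mu0 (T @^-1` A) = muM mu0 A.

Definition recurrentM {dN} {N : measurableType dN} {R : realType}
  (mu0 : probability N R) (T : int * N -> int * N) : Prop :=
  forall A, measurableM A ->
    negligibleM mu0 [set p | A p /\ forall k : nat, (0 < k)%N -> ~ A (iter k T p)].

From Pilot Require Import Defs.
From HB Require Import structures.
From mathcomp Require Import all_boot all_order all_algebra.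
From mathcomp Require Import all_classical all_reals all_analysis.
Import Order.TTheory GRing.Theory Num.Theory.
Local Open Scope classical_set_scope.
Local Open Scope ring_scope.
Set Implicit Arguments. Unset Strict Implicit. Unset Printing Implicit Defensive.

(* On cell [n] the quenched map [T_l] is the point-of-view map [F] started at
   [(x, sigma^n l)]: after [t] steps the particle is in cell [n + S_t (x, sigma^n l)].
   Recurrence of the cocycle, Fubini and the shift invariance of [Pi] thus give,
   for [Pi]-a.e. [l], that from every cell [mu0]-a.e. point comes back to its cell.
   As [T_l] preserves [mu], the first-return map to a cell then preserves [mu0]
   (Kac), and Poincare's argument for this induced map shows that the points of
   [A] in cell [n] that never return to [A] form a null set. *)

Section GateMeasure.
Variables (R : realType) (dN : measure_display) (N : measurableType dN).
Variable mu0 : probability N R.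
Implicit Types (T : int * N -> int * N) (A B : set (int * N)) (E W : set N).

Definition cell n E : set (int * N) := [set p | p.1 = n /\ E p.2].

Lemma measurableM_cell n E : measurable E -> measurableM (cell n E).
Proof.
move=> mE m; have [->|mn] := eqVneq m n.
  by rewrite (_ : slice n _ = E) //; apply/seteqP; split=> x //= [].
rewrite (_ : slice m _ = set0) //; apply/seteqP; split=> // x [/= mn' _].
by move: mn; rewrite mn' eqxx.
Qed.

Lemma measurableMI A B : measurableM A -> measurableM B -> measurableM (A `&` B).
Proof. by move=> mA mB m; exact: measurableI (mA m) (mB m). Qed.

Lemma measurableMC A : measurableM A -> measurableM (~` A).
Proof. by move=> mA m; exact: measurableC (mA m). Qed.

Lemma measurableM_bigcap (F : nat -> set (int * N)) (P : set nat) :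
  (forall k, P k -> measurableM (F k)) -> measurableM (\bigcap_(k in P) F k).
Proof.
by move=> mF m; exact: (@bigcap_measurableType _ _ (fun k => slice m (F k)) P (fun k Pk => mF k Pk m)).
Qed.

Lemma muM_ge0 A : (0 <= muM mu0 A)%E.
Proof. by apply: esum_ge0 => n _; exact: measure_ge0. Qed.

Lemma muM_eq0 A : (forall n, mu0 (slice n A) = 0%E) -> muM mu0 A = 0%E.
Proof. by move=> A0; apply: esum1 => n _; exact: A0. Qed.

Lemma muM_cell n A : A `<=` [set p | p.1 = n] -> muM mu0 A = mu0 (slice n A).
Proof.
move=> An; rewrite /muM.
transitivity (\esum_(m in [set: int])
    (if m \in [set n] then mu0 (slice m A) else 0))%E.
  apply: eq_esum => m _; case: ifPn => // /negP; rewrite inE /= => mn.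
  rewrite (_ : slice m A = set0) ?measure0 //.
  by apply/seteqP; split => // x /An /= mE; exfalso; apply: mn.
by rewrite -esum_mkcondl setIT esum_set1.
Qed.

Lemma muMU A B : measurableM A -> measurableM B -> A `&` B = set0 ->
  muM mu0 (A `|` B) = (muM mu0 A + muM mu0 B)%E.
Proof.
move=> mA mB AB0; rewrite /muM -esumD => [|n _|n _]; try exact: measure_ge0.
apply: eq_esum => n _; rewrite -measureU //.
by apply/seteqP; split => // x ABx; have : (A `&` B) (n, x) by []; rewrite AB0.
Qed.

Lemma preserves_muM_iter T k : preserves_muM mu0 T -> preserves_muM mu0 (iter k T).
Proof.
move=> TP; elim: k => [|k IH] A mA //=.
rewrite (_ : _ @^-1` A = iter k T @^-1` (T @^-1` A)); last first.
  by apply/seteqP; split => p; rewrite /preimage /= -iterS iterSr.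
have [mTA <-] := TP A mA.
exact: IH.
Qed.


Definition first_visit T n E k : set (int * N) :=
  iter k T @^-1` cell n E `&`
  \bigcap_(s in [set s | (s < k)%N]) (iter s T @^-1` ~` cell n setT).

Definition first_return_at T n E k : set N := slice n (T @^-1` first_visit T n E k).

(* The preimage of [E] under the first-return map of [T] to cell [n]. *)
Definition induced_preimage T n E : set N := \bigcup_k first_return_at T n E k.

Definition returns T n (x : N) : Prop := exists2 t, (0 < t)%N & (iter t T (n, x)).1 = n.

Definition visits T n W : set N := \bigcup_t slice n (iter t T @^-1` cell n W).

Lemma iter_after_return T n x k t : (iter k T (T (n, x))).1 = n ->
  iter t T (n, (iter k T (T (n, x))).2) = iter (t + k.+1) T (n, x).
Proof.
move=> ret; rewrite iterD iterSr; congr (iter t T _).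
by move: ret; case: (iter k T _) => m y /= ->.
Qed.

Lemma first_visit_uniq T n E E' j k p :
  first_visit T n E j p -> first_visit T n E' k p -> j = k.
Proof.
move=> [[cj _] notj] [[ck _] notk].
by case: (ltngtP j k) => // jk; exfalso; [apply: (notk j jk) | apply: (notj k jk)].
Qed.

Lemma first_visit_setT T n E k p :
  first_visit T n setT k p -> E (iter k T p).2 -> first_visit T n E k p.
Proof. by move=> [[cell_k _] notk] Ek. Qed.

Lemma first_returnP T n x t : (0 < t)%N -> (iter t T (n, x)).1 = n ->
  exists2 k, (k < t)%N & first_visit T n setT k (T (n, x)).
Proof.
move=> t_gt0 ret_t.
have ex_ret : exists t, (0 < t)%N && ((iter t T (n, x)).1 == n).
  by exists t; rewrite t_gt0 ret_t eqxx.
case: (ex_minnP ex_ret) => t1 /andP[t1_gt0 /eqP ret1] t1_min.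
exists t1.-1.
  by rewrite prednK // (leq_trans _ (t1_min t _)) ?t_gt0 ?ret_t ?eqxx.
split; first by rewrite /= -iterSr prednK.
move=> s /= s_lt [/= ret_s _]; move: ret_s; rewrite -iterSr => ret_s.
have := t1_min s.+1; rewrite ret_s eqxx => /(_ isT).
by rewrite -ltnS prednK // in s_lt; rewrite leqNgt s_lt.
Qed.

Lemma trivIset_first_return_at T n E : trivIset setT (first_return_at T n E).
Proof. by move=> i j _ _ [x [/= fi fj]]; exact: first_visit_uniq fi fj. Qed.

Lemma visitsE T n W : visits T n W = W `|` induced_preimage T n (visits T n W).
Proof.
apply/seteqP; split => x.
- case=> [[|t] _ visit_t]; first by left; case: visit_t.
  right; have [k k_lt fk] := first_returnP (ltn0Sn t) visit_t.1.
  exists k => //; apply: (first_visit_setT fk); exists (t - k)%N => //.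
  by rewrite /slice /preimage /= iter_after_return ?addnS ?subnK // fk.1.1.
- case=> [Wx|[k _ [[ret [t _ visit_t]] _]]]; first by exists 0%N.
  by exists (t + k.+1)%N => //; rewrite /slice /preimage /= -iter_after_return.
Qed.

Section MeasurePreserving.
Variable T : int * N -> int * N.
Hypothesis TP : preserves_muM mu0 T.

Lemma measurableM_first_visit n E k :
  measurable E -> measurableM (first_visit T n E k).
Proof.
move=> mE; apply: measurableMI.
  exact: (preserves_muM_iter k TP (measurableM_cell n mE)).1.
apply: measurableM_bigcap => s _.
exact: (preserves_muM_iter s TP (measurableMC (measurableM_cell n measurableT))).1.
Qed.

Lemma measurable_first_return_at n E k :
  measurable E -> measurable (first_return_at T n E k).
Proof. by move=> mE; exact: (TP (measurableM_first_visit n k mE)).1. Qed.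

Lemma measurable_induced_preimage n E :
  measurable E -> measurable (induced_preimage T n E).
Proof. by move=> mE; apply: bigcupT_measurable => k; exact: measurable_first_return_at. Qed.


Lemma preimage_first_visit n E k : T @^-1` first_visit T n E k =
  (T @^-1` first_visit T n E k `&` cell n setT) `|` first_visit T n E k.+1.
Proof.
apply/seteqP; split => p.
- move=> [visit_k not_before]; have [c|c] := pselect (cell n setT p).
    by left.
  right; split; first by rewrite /preimage /= -iterS iterSr.
  case=> [|s] s_lt //.
  by have := not_before s s_lt; rewrite /preimage /= -iterSr iterS.
- case=> [[]//|[visit_k not_before]]; split.
    by move: visit_k; rewrite /preimage /= -iterS iterSr.
  by move=> s s_lt; have := not_before s.+1 s_lt; rewrite /preimage /= -iterS iterSr.
Qed.

(* Kac: [mu0 E] splits as the mass of the points first returning to [E] before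
   time [m] plus the mass [muM (first_visit m)] of those still on their way. *)
Lemma induced_preimage_le n E :
  measurable E -> (mu0 (induced_preimage T n E) <= mu0 E)%E.
Proof.
move=> mE.
have mG k := measurableM_first_visit n k mE.
have step k : muM mu0 (first_visit T n E k) =
    (mu0 (first_return_at T n E k) + muM mu0 (first_visit T n E k.+1))%E.
  rewrite -(TP (mG k)).2 {1}preimage_first_visit muMU //; last 2 first.
  - by apply: measurableMI; [exact: (TP (mG k)).1|exact: measurableM_cell].
  - by apply/seteqP; split => // p [[_ c] [_ /(_ 0%N isT)]].
  rewrite (muM_cell (n := n)); last by move=> p [_ []].
  congr (_ + _)%E; congr (mu0 _).
  by apply/seteqP; split => x; [case|].
have visit0 : muM mu0 (first_visit T n E 0) = mu0 E.
  rewrite (muM_cell (n := n)); last by move=> p [[]].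
  by congr (mu0 _); apply/seteqP; split => x; [case=> [[]]|split].
have sum m : mu0 E = (\sum_(k < m) mu0 (first_return_at T n E k) +
                      muM mu0 (first_visit T n E m))%E.
  elim: m => [|m IH]; first by rewrite big_ord0 add0e visit0.
  by rewrite big_ord_recr /= -addeA -step.
rewrite measure_bigcup //; last 2 first.
- by move=> k _; exact: measurable_first_return_at.
- exact: trivIset_first_return_at.
apply: lime_le; first by apply: is_cvg_nneseries => k _ _; exact: measure_ge0.
apply: nearW => m /=; rewrite (sum m) big_mkord.
under eq_bigl do rewrite in_setT.
by apply: leeDl; exact: muM_ge0.
Qed.


Lemma induced_preimage_eq n E : {ae mu0, forall x, returns T n x} ->
  measurable E -> mu0 (induced_preimage T n E) = mu0 E.
Proof.
move=> [Z [mZ Z0 notret_Z]] mE.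
have mCE : measurable (~` E) by exact: measurableC.
have mIE := measurable_induced_preimage n mE.
have mICE := measurable_induced_preimage n mCE.
have IE_le := induced_preimage_le n mE.
have ICE_le := induced_preimage_le n mCE.
have disj : induced_preimage T n E `&` induced_preimage T n (~` E) = set0.
  apply/seteqP; split => // x [[i _ fi] [j _ fj]].
  have ij := first_visit_uniq fi fj; subst j.
  by case: fi => [[_ Ei] _]; case: fj => [[_ NEi] _].
have cover : ~` Z `<=` induced_preimage T n E `|` induced_preimage T n (~` E).
  move=> x nZx; have [t t_gt0 ret] : returns T n x.
    by apply: contrapT => /(notret_Z x).
  have [k _ fk] := first_returnP t_gt0 ret.
  have [Ek|NEk] := pselect (E (iter k T (T (n, x))).2); [left|right].
  - by exists k => //; exact: first_visit_setT.
  - by exists k => //; exact: first_visit_setT.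
have IE_ICE_ge1 :
    (1 <= mu0 (induced_preimage T n E) + mu0 (induced_preimage T n (~` E)))%E.
  rewrite -measureU // -(sube0 1%E) -Z0 -probability_setC //.
  by apply: le_measure cover; rewrite inE //; [exact: measurableC|exact: measurableU].
have E_CE : (mu0 E + mu0 (~` E) = 1)%E.
  by rewrite -measureU ?setICr // setUCr; exact: probability_setT.
apply/eqP; rewrite eq_le IE_le /= leNgt; apply/negP => IE_lt.
have := lte_leD (fin_num_measure mu0 _ mICE) IE_lt ICE_le.
by rewrite E_CE ltNge IE_ICE_ge1.
Qed.

Lemma measurable_visits n W : measurable W -> measurable (visits T n W).
Proof.
move=> mW; apply: bigcupT_measurable => t.
exact: (preserves_muM_iter t TP (measurableM_cell n mW)).1.
Qed.

End MeasurePreserving.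

Lemma recurrentM_of_returns T : preserves_muM mu0 T ->
  (forall n, {ae mu0, forall x, returns T n x}) -> recurrentM mu0 T.
Proof.
move=> TP ret A mA.
pose B := A `&` \bigcap_(k in [set k | (0 < k)%N]) (iter k T @^-1` ~` A).
have mB : measurableM B.
  apply: measurableMI => //; apply: measurableM_bigcap => k _.
  exact: (preserves_muM_iter k TP (measurableMC mA)).1.
exists B; split => //; apply: muM_eq0 => n.
pose W := slice n B.
have mW : measurable W := mB n.
(* Poincare: [visits W] is the disjoint union of [W] and its induced preimage,
   which has the same measure. *)
have W_disj : W `&` induced_preimage T n (visits T n W) = set0.
  apply/seteqP; split => // x [[_ noret] [k _ [[ret_k [t _ [ret_t [Av _]]]] _]]].
  apply: (noret (t + k.+1)%N); first by rewrite /= addnS.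
  rewrite /preimage /= -iter_after_return //.
  by move: ret_t Av; case: (iter t T _) => ? ? /= ->.
have mV := measurable_visits TP n mW.
have V_split : mu0 (visits T n W) = (mu0 W + mu0 (visits T n W))%E.
  rewrite -{2}(induced_preimage_eq TP (ret n) mV) -measureU //.
  - by rewrite -visitsE.
  - exact: measurable_induced_preimage.
move: V_split => /(congr1 (fun z => z - mu0 (visits T n W))%E).
by rewrite addeK ?subee ?fin_num_measure.
Qed.

End GateMeasure.

Section PointOfView.
Variables (dN d : measure_display) (N : measurableType dN) (Om : measurableType d).
Variables (Rm : Om -> N -> N) (e : N -> Om -> int).

Lemma shiftzD k m (l : seqZ Om) : shiftz k (shiftz m l) = shiftz (k + m) l.
Proof. by apply: funext => j; rewrite /shiftz addrA. Qed.

Lemma shiftz0 (l : seqZ Om) : shiftz 0 l = l.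
Proof. by apply: funext => j; rewrite /shiftz addr0. Qed.

Lemma cocycleS t xi : cocycle Rm e t.+1 xi =
  cocycle Rm e t xi + (let y := iter t (Fpov Rm e) xi in e y.1 (y.2 0)).
Proof. by rewrite /cocycle big_ord_recr. Qed.

Lemma iter_Fpov_shiftz t xi :
  (iter t (Fpov Rm e) xi).2 = shiftz (cocycle Rm e t xi) xi.2.
Proof.
elim: t => [|t IH]; first by rewrite /cocycle big_ord0 shiftz0.
by rewrite iterS /= IH shiftzD cocycleS /= IH addrC.
Qed.

Lemma iter_Tmap l n x t : iter t (Tmap Rm e l) (n, x) =
  (n + cocycle Rm e t (x, shiftz n l), (iter t (Fpov Rm e) (x, shiftz n l)).1).
Proof.
elim: t => [|t IH]; first by rewrite /cocycle big_ord0 addr0.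
rewrite iterS IH cocycleS /= iter_Fpov_shiftz /= addrA.
by rewrite /shiftz add0r [_ + n]addrC.
Qed.

Lemma measurable_shiftz k : measurable_fun [set: seqZ Om] (shiftz k).
Proof.
apply: (@measurability _ _ _ _ _ _ (@cyl d Om : set (set (seqZ Om)))) => //.
move=> _ [C [m [A [mA ->]]] <-].
apply: sub_sigma_algebra; exists (m + k), A; split => //.
by apply/seteqP; split => l //= [].
Qed.

Section ShiftInvariance.
Variables (R : realType) (Pi : probability (seqZ Om) R).
Hypothesis Pi_lshift :
  forall A : set (seqZ Om), measurable A -> Pi (Defs.lshift @^-1` A) = Pi A.

Lemma measurable_shiftz_preimage k (A : set (seqZ Om)) :
  measurable A -> measurable (shiftz k @^-1` A).
Proof. by move=> mA; rewrite -[_ @^-1` _]setTI; exact: measurable_shiftz. Qed.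

Lemma shiftz_preimage k (A : set (seqZ Om)) :
  measurable A -> Pi (shiftz k @^-1` A) = Pi A.
Proof.
have shiftz_nat (j : nat) B : measurable B -> Pi (shiftz j @^-1` B) = Pi B.
  elim: j B => [|j IH] B mB.
    by congr (Pi _); apply/seteqP; split => l /=; rewrite shiftz0.
  have -> : shiftz j.+1 @^-1` B = Defs.lshift @^-1` (shiftz j @^-1` B).
    by apply/seteqP; split => l /=; rewrite /Defs.lshift shiftzD -addn1 PoszD addrC.
  by rewrite Pi_lshift ?IH //; exact: measurable_shiftz_preimage.
case: k => [j|j] mA; first exact: shiftz_nat.
rewrite -(shiftz_nat j.+1) //; last exact: measurable_shiftz_preimage.
by congr (Pi _); apply/seteqP; split => l /=; rewrite shiftzD NegzE addNr shiftz0.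
Qed.

Lemma ae_shiftz (P : seqZ Om -> Prop) : {ae Pi, forall l, P l} ->
  {ae Pi, forall l, forall k : int, P (shiftz k l)}.
Proof.
move=> [Z [mZ Z0 notP_Z]].
have aek k : {ae Pi, forall l, P (shiftz k l)}.
  exists (shiftz k @^-1` Z); split; first exact: measurable_shiftz_preimage.
    by rewrite shiftz_preimage.
  by move=> l /= notP; apply: notP_Z.
have : {ae Pi, forall l, forall j : nat, P (shiftz j l) /\ P (shiftz (Negz j) l)}.
  by apply: ae_foralln => j; apply: filterS2 (aek j) (aek (Negz j)).
by apply: filterS => l Pl [j|j]; [exact: (Pl j).1|exact: (Pl j).2].
Qed.

End ShiftInvariance.

Lemma ae_ysection_null (R : realType) (mu0 : probability N R)
  (Pi : probability (seqZ Om) R) (Z : set (N * seqZ Om)) :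
  measurable Z -> (mu0 \x Pi)%E Z = 0%E ->
  {ae Pi, forall l, mu0 (ysection Z l) = 0%E}.
Proof.
move=> mZ Z0.
have Z0' : (mu0 \x^ Pi)%E Z = 0%E.
  rewrite -Z0; apply/esym; apply: product_measure_unique => // A B mA mB.
  exact: product_measure2E.
have msec := measurable_fun_ysection mu0 mZ.
have int0 : (\int[Pi]_(l in setT) `|(mu0 \o ysection Z) l| = 0)%E.
  rewrite -Z0'; apply: eq_integral => l _.
  by rewrite gee0_abs //; exact: measure_ge0.
have [Z1 [mZ1 Z10 sec_Z1]] := (ae_eq_integral_abs Pi measurableT msec).1 int0.
exists Z1; split => // l /= sec_l; apply: sec_Z1 => /=.
by apply/not_implyP; split.
Qed.

End PointOfView.

Theorem proposition4p1 (R : realType) (dN d : measure_display)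
  (N : measurableType dN) (Om : measurableType d)
  (mu0 : probability N R) (Pi : probability (seqZ Om) R)
  (Rm : Om -> N -> N) (e : N -> Om -> int) :
  shift_ergodic Pi ->
  (forall x w, e x w = 1 \/ e x w = -1) ->
  measurable_fun [set: N * Om] (fun p => Rm p.2 p.1) ->
  measurable [set p : N * Om | e p.1 p.2 = 1] ->
  measurable_fun [set: N * seqZ Om] (Fpov Rm e) ->
  (forall A : set (N * seqZ Om), measurable A ->
     (mu0 \x Pi)%E (Fpov Rm e @^-1` A) = (mu0 \x Pi)%E A) ->
  {ae Pi, forall l, preserves_muM mu0 (Tmap Rm e l)} ->
  {ae (mu0 \x Pi)%E, forall xi, exists nj : nat -> nat,
       {homo nj : i j / (i < j)%N} /\ forall j, cocycle Rm e (nj j) xi = 0} ->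
  {ae Pi, forall l, recurrentM mu0 (Tmap Rm e l)}.
Proof.
move=> [_ [Pi_lshift _]] _ _ _ _ _ Tmap_pres cocycle_rec.
have [Z [mZ Z0 returns_Z]] : {ae (mu0 \x Pi)%E,
    forall xi, exists2 t, (0 < t)%N & cocycle Rm e t xi = 0}.
  apply: filterS cocycle_rec => xi [nj [nj_incr nj0]]; exists (nj 1%N) => //.
  exact: leq_ltn_trans (leq0n _) (nj_incr 0%N 1%N isT).
have := ae_shiftz Pi_lshift (ae_ysection_null mZ Z0).
apply: filterS2 Tmap_pres => l Tl_pres sections_null.
apply: recurrentM_of_returns => // n.
exists (ysection Z (shiftz n l)); split.
- exact: measurable_ysection.
- exact: sections_null.
move=> x no_return; rewrite /ysection /= inE; apply: returns_Z => -[t t_gt0 St0].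
by apply: no_return; exists t => //; rewrite iter_Tmap /= St0 addr0.
Qed.
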